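(* There is a symmetric monoidal dagger equivalence $\mathrm{sHilb}\simeq\mathrm{Hilb}_{\mathbb{Z}/2}$.
   Context: Both categories have as underlying objects finite-dimensional complex $\mathbb{Z}/2$-graded vector spaces $V=V_0\oplus V_1$ equipped with a nondegenerate sesquilinear form for which $V_0\perp V_1$, morphisms the even (degree-preserving) linear maps, dagger the adjoint ($\langle Tv,w\rangle=\langle v,T^\dagger w\rangle$), graded tensor product with Koszul braiding $v\otimes w\mapsto(-1)^{|v||w|}w\otimes v$. In $\mathrm{sHilb}$ the form satisfies $\langle v,w\rangle=(-1)^{|v||w|}\overline{\langle w,v\rangle}$ for homogeneous $v,w$, $\langle v,v\rangle\ge0$ for even $v$ and $\langle v,v\rangle/i\ge0$ for odd $v$, and the tensor product form is $\langle v_1\otimes w_1,v_2\otimes w_2\rangle=(-1)^{|v_2||w_1|}\langle v_1,v_2\rangle\langle w_1,w_2\rangle$. In $\mathrm{Hilb}_{\mathbb{Z}/2}$ the form satisfies $\langle v,w\rangle=\overline{\langle w,v\rangle}$ and $\langle v,v\rangle\ge0$ for all $v$ (an ordinary inner product), and the tensor product form is $\langle v_1\otimes w_1,v_2\otimes w_2\rangle=\langle v_1,v_2\rangle\langle w_1,w_2\rangle$. A symmetric monoidal dagger equivalence is a symmetric monoidal functor which is a dagger functor ($F(f^\dagger)=F(f)^\dagger$) with unitary monoidal structure isomorphisms and which is an equivalence (with inverse of the same kind up to unitary monoidal natural isomorphism). *)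

From mathcomp Require Import all_boot all_algebra.
From mathcomp Require Import complex.
From mathcomp Require Import Rstruct.
Set Implicit Arguments. Unset Strict Implicit. Unset Printing Implicit Defensive.
Import GRing.Theory Num.Theory.
Local Open Scope ring_scope.

Definition C : numClosedFieldType := (Rdefinitions.R)[i].

(* A finite-dimensional Z/2-graded complex vector space C^idx with a chosen
   homogeneous basis indexed by the finite type [idx] (basis vector i has
   degree [deg i], true = odd), together with the Gram matrix of a
   sesquilinear form. *)
Record gspace := GSpace {
  idx : finType;
  deg : idx -> bool;
  gram : idx -> idx -> C }.
Arguments deg : clear implicits.
Arguments gram : clear implicits.

Definition vec (X : gspace) := idx X -> C.

Definition form (X : gspace) (v w : vec X) : C :=
  \sum_(i : idx X) \sum_(j : idx X) (v i)^* * gram X i j * w j.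

Definition homog (X : gspace) (d : bool) (v : vec X) : Prop :=
  forall i, deg X i != d -> v i = 0.

Definition sign (b : bool) : C := if b then -1 else 1.

Definition graded_form (X : gspace) : Prop :=
  forall i j, deg X i != deg X j -> gram X i j = 0.
Definition nondegenerate (X : gspace) : Prop :=
  (forall v : vec X, (forall w, form v w = 0) -> forall i, v i = 0) /\
  (forall w : vec X, (forall v, form v w = 0) -> forall i, w i = 0).

(* objects of sHilb (super = true) and of Hilb_{Z/2} (super = false) *)
Definition valid (super : bool) (X : gspace) : Prop :=
  graded_form X /\ nondegenerate X /\
  if super then
    (forall d e (v w : vec X), homog d v -> homog e w ->
        form v w = sign (d && e) * (form w v)^*) /\
    (forall v : vec X, homog false v -> 0 <= form v v) /\
    (forall v : vec X, homog true v -> 0 <= form v v / 'i)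
  else
    (forall v w : vec X, form v w = (form w v)^*) /\
    (forall v : vec X, 0 <= form v v).

(* linear maps X -> Y as matrices (rows indexed by Y, columns by X) *)
Record mx (X Y : gspace) := Mx { ent : idx Y -> idx X -> C }.
Arguments Mx : clear implicits.

Definition even (X Y : gspace) (T : mx X Y) : Prop :=
  forall j i, deg Y j != deg X i -> ent T j i = 0.

Definition app (X Y : gspace) (T : mx X Y) (v : vec X) : vec Y :=
  fun j => \sum_(i : idx X) ent T j i * v i.

Definition idm (X : gspace) : mx X X := Mx X X (fun i j => (i == j)%:R).
Definition comp (X Y Z : gspace) (T : mx Y Z) (S : mx X Y) : mx X Z :=
  Mx X Z (fun k i => \sum_(j : idx Y) ent T k j * ent S j i).

Definition is_adjoint (X Y : gspace) (T : mx X Y) (S : mx Y X) : Prop :=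
  forall (v : vec X) (w : vec Y), form (app T v) w = form v (app S w).

Definition unitary (X Y : gspace) (u : mx X Y) : Prop :=
  even u /\ exists v : mx Y X,
    [/\ even v, comp u v = idm Y, comp v u = idm X & is_adjoint u v].

(* monoidal structure: graded tensor product; the tensor product form carries
   the Koszul sign (-1)^{|v2||w1|} exactly in the super case *)
Definition tens (super : bool) (X Y : gspace) : gspace :=
  GSpace (fun p : idx X * idx Y => deg X p.1 (+) deg Y p.2)
         (fun p q : idx X * idx Y =>
            sign [&& super, deg X q.1 & deg Y p.2] * gram X p.1 q.1 * gram Y p.2 q.2).

Definition unitsp : gspace := GSpace (fun _ : unit => false) (fun _ _ => 1).

Definition tensm (s : bool) (X Y X' Y' : gspace) (f : mx X Y) (g : mx X' Y')
  : mx (tens s X X') (tens s Y Y') :=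
  Mx (tens s X X') (tens s Y Y') (fun q p => ent f q.1 p.1 * ent g q.2 p.2).

Definition assoc (s : bool) (X Y Z : gspace)
  : mx (tens s (tens s X Y) Z) (tens s X (tens s Y Z)) :=
  Mx (tens s (tens s X Y) Z) (tens s X (tens s Y Z))
     (fun q p => [&& q.1 == p.1.1, q.2.1 == p.1.2 & q.2.2 == p.2]%:R).

Definition lunit (s : bool) (X : gspace) : mx (tens s unitsp X) X :=
  Mx (tens s unitsp X) X (fun q p => (q == p.2)%:R).
Definition runit (s : bool) (X : gspace) : mx (tens s X unitsp) X :=
  Mx (tens s X unitsp) X (fun q p => (q == p.1)%:R).

Definition braid (s : bool) (X Y : gspace) : mx (tens s X Y) (tens s Y X) :=
  Mx (tens s X Y) (tens s Y X)
     (fun q p => sign (deg X p.1 && deg Y p.2) * ((q.1 == p.2) && (q.2 == p.1))%:R).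

Record SMFunctor (s t : bool) := SMF {
  fo : gspace -> gspace;
  fm : forall X Y, mx X Y -> mx (fo X) (fo Y);
  fJ : forall X Y, mx (tens t (fo X) (fo Y)) (fo (tens s X Y));
  fJ0 : mx unitsp (fo unitsp) }.

Definition is_SMD_functor (s t : bool) (F : SMFunctor s t) : Prop :=
  (forall X, valid s X -> valid t (fo F X)) /\
  (forall X Y (T : mx X Y), valid s X -> valid s Y -> even T -> even (fm F T)) /\
  (forall X, valid s X -> fm F (idm X) = idm (fo F X)) /\
  (forall X Y Z (T : mx Y Z) (S : mx X Y), valid s X -> valid s Y -> valid s Z ->
     even T -> even S -> fm F (comp T S) = comp (fm F T) (fm F S)) /\
  (forall X Y (T : mx X Y) (S : mx Y X), valid s X -> valid s Y ->
     even T -> even S -> is_adjoint T S -> is_adjoint (fm F T) (fm F S)) /\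
  (forall X Y, valid s X -> valid s Y -> unitary (fJ F X Y)) /\
  unitary (fJ0 F) /\
  (forall X Y X' Y' (f : mx X Y) (g : mx X' Y'),
     valid s X -> valid s Y -> valid s X' -> valid s Y' -> even f -> even g ->
     comp (fm F (tensm s f g)) (fJ F X X') = comp (fJ F Y Y') (tensm t (fm F f) (fm F g))) /\
  (forall X Y Z, valid s X -> valid s Y -> valid s Z ->
     comp (fm F (assoc s X Y Z))
          (comp (fJ F (tens s X Y) Z) (tensm t (fJ F X Y) (idm (fo F Z))))
     = comp (fJ F X (tens s Y Z))
          (comp (tensm t (idm (fo F X)) (fJ F Y Z)) (assoc t (fo F X) (fo F Y) (fo F Z)))) /\
  (forall X, valid s X ->
     comp (fm F (lunit s X)) (comp (fJ F unitsp X) (tensm t (fJ0 F) (idm (fo F X))))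
     = lunit t (fo F X)) /\
  (forall X, valid s X ->
     comp (fm F (runit s X)) (comp (fJ F X unitsp) (tensm t (idm (fo F X)) (fJ0 F)))
     = runit t (fo F X)) /\
  (forall X Y, valid s X -> valid s Y ->
     comp (fm F (braid s X Y)) (fJ F X Y) = comp (fJ F Y X) (braid t (fo F X) (fo F Y))).

(* eta : Id ==> G o F is a unitary monoidal natural isomorphism
   (monoidal structure of G o F: J = G(J^F) o J^G, J0 = G(J0^F) o J0^G) *)
Definition unit_iso (s t : bool) (F : SMFunctor s t) (G : SMFunctor t s)
  (eta : forall X, mx X (fo G (fo F X))) : Prop :=
  (forall X, valid s X -> unitary (eta X)) /\
  (forall X Y (f : mx X Y), valid s X -> valid s Y -> even f ->
     comp (eta Y) f = comp (fm G (fm F f)) (eta X)) /\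
  (forall X Y, valid s X -> valid s Y ->
     eta (tens s X Y)
     = comp (fm G (fJ F X Y)) (comp (fJ G (fo F X) (fo F Y)) (tensm s (eta X) (eta Y)))) /\
  eta unitsp = comp (fm G (fJ0 F)) (fJ0 G).

Definition counit_iso (s t : bool) (F : SMFunctor s t) (G : SMFunctor t s)
  (eps : forall Y, mx (fo F (fo G Y)) Y) : Prop :=
  (forall Y, valid t Y -> unitary (eps Y)) /\
  (forall Y Y' (g : mx Y Y'), valid t Y -> valid t Y' -> even g ->
     comp (eps Y') (fm F (fm G g)) = comp g (eps Y)) /\
  (forall Y Y', valid t Y -> valid t Y' ->
     comp (eps (tens t Y Y')) (comp (fm F (fJ G Y Y')) (fJ F (fo G Y) (fo G Y')))
     = tensm t (eps Y) (eps Y')) /\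
  comp (eps unitsp) (comp (fm F (fJ0 G)) (fJ0 F)) = idm unitsp.

Definition SMD_equivalence (s t : bool) : Prop :=
  exists (F : SMFunctor s t) (G : SMFunctor t s)
         (eta : forall X, mx X (fo G (fo F X)))
         (eps : forall Y, mx (fo F (fo G Y)) Y),
    [/\ is_SMD_functor F, is_SMD_functor G, unit_iso eta & counit_iso eps].

Notation sHilb := true.
Notation Hilb_Z2 := false.

(* Both categories consist of the same graded spaces and even maps; only the
   form differs.  Multiplying the Gram matrix on odd basis vectors by -i turns
   a super Hilbert form into an inner product (for odd v, <v,v>/i = -i<v,v>),
   and multiplying by i goes back.  Even maps commute with such a degreewise
   rescaling, so adjoints are preserved, and since (-i)^2 = -1 the rescaling
   c absorbs the Koszul sign of the super tensor form:
   c(a+b) (-1)^(ab) = c(a) c(b).  Hence both functors are the identity on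
   matrices, their structure maps are identity matrices, and the two
   rescalings compose to the identity. *)
From mathcomp Require Import all_boot all_algebra complex Rstruct ring.
From Stdlib Require Import FunctionalExtensionality.
Set Implicit Arguments. Unset Strict Implicit. Unset Printing Implicit Defensive.
Import GRing.Theory Num.Theory.
Local Open Scope ring_scope.

Lemma mx_ext (X Y : gspace) (M N : mx X Y) :
  (forall q p, ent M q p = ent N q p) -> M = N.
Proof.
case: M => f; case: N => g /= eq_fg; congr Mx.
by apply: functional_extensionality => q; apply: functional_extensionality.
Qed.

Lemma sum_deltaL (R : nzSemiRingType) (I : finType) (F : I -> R) (k : I) :
  \sum_j (k == j)%:R * F j = F k.
Proof.
rewrite (bigD1 k) //= eqxx mul1r big1 ?addr0 // => j /negPf.
by rewrite eq_sym => ->; rewrite mul0r.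
Qed.

Lemma sum_deltaR (R : nzSemiRingType) (I : finType) (F : I -> R) (k : I) :
  \sum_j F j * (j == k)%:R = F k.
Proof.
rewrite (bigD1 k) //= eqxx mulr1 big1 ?addr0 // => j /negPf ->; exact: mulr0.
Qed.

Definition relabel (X Y : gspace) (f : idx X -> idx Y) : mx X Y :=
  Mx X Y (fun q p => (q == f p)%:R).

Lemma eq_relabel (X Y : gspace) (f g : idx X -> idx Y) :
  f =1 g -> relabel f = relabel g.
Proof. by move=> fg; apply: mx_ext => q p; rewrite /= fg. Qed.

Lemma comp_relabel (X Y Z : gspace) (f : idx Y -> idx Z) (g : idx X -> idx Y) :
  comp (relabel f) (relabel g) = relabel (f \o g).
Proof. by apply: mx_ext => k i; rewrite /= sum_deltaR. Qed.

Lemma tensm_relabel s (X Y X' Y' : gspace) (f : idx X -> idx Y) (g : idx X' -> idx Y') :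
  tensm s (relabel f) (relabel g)
  = @relabel (tens s X X') (tens s Y Y') (fun p => (f p.1, g p.2)).
Proof. by apply: mx_ext => -[a b] p; rewrite /= xpair_eqE -mulnb natrM. Qed.

Lemma idm_relabel (X : gspace) : idm X = relabel id.
Proof. by []. Qed.

Lemma assoc_relabel s (X Y Z : gspace) :
  assoc s X Y Z = @relabel (tens s (tens s X Y) Z) (tens s X (tens s Y Z))
    (fun p => (p.1.1, (p.1.2, p.2))).
Proof. by apply: mx_ext => -[a [b c]] p; rewrite /= !xpair_eqE. Qed.

Lemma lunit_relabel s (X : gspace) : lunit s X = @relabel (tens s unitsp X) X snd.
Proof. by []. Qed.

Lemma runit_relabel s (X : gspace) : runit s X = @relabel (tens s X unitsp) X fst.
Proof. by []. Qed.

Lemma even_relabel (X Y : gspace) (f : idx X -> idx Y) :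
  (forall p, deg Y (f p) = deg X p) -> even (relabel f).
Proof. by move=> degf q p /=; case: (q =P f p) => [->|//]; rewrite degf eqxx. Qed.

Lemma app_relabel (X Y : gspace) (f : idx X -> idx Y) (g : idx Y -> idx X) (v : vec X) :
  cancel f g -> cancel g f -> app (relabel f) v = v \o g.
Proof.
move=> fK gK; apply: functional_extensionality => j; rewrite /app /=.
by under eq_bigr do rewrite eq_sym (can2_eq fK gK) eq_sym; rewrite sum_deltaL.
Qed.

Lemma form_relabel (X Y : gspace) (f : idx X -> idx Y) (g : idx Y -> idx X)
    (v : vec X) (w : vec Y) :
  cancel f g -> cancel g f -> (forall p p', gram Y (f p) (f p') = gram X p p') ->
  form (v \o g) w = form v (w \o f).
Proof.
move=> fK gK gramf; rewrite /form (reindex f) /=; last by exists g => ? _.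
apply: eq_bigr => i _; rewrite (reindex f) /=; last by exists g => ? _.
by apply: eq_bigr => j _; rewrite fK gramf.
Qed.

Lemma relabel_unitary (X Y : gspace) (f : idx X -> idx Y) :
  bijective f -> (forall p, deg Y (f p) = deg X p) ->
  (forall p p', gram Y (f p) (f p') = gram X p p') -> unitary (relabel f).
Proof.
case=> g fK gK degf gramf; split; first exact: even_relabel.
exists (relabel g); split.
- by apply: even_relabel => q; rewrite -[in RHS](gK q) degf.
- by rewrite comp_relabel; exact: eq_relabel gK.
- by rewrite comp_relabel; exact: eq_relabel fK.
move=> v w; rewrite (app_relabel v fK gK) (app_relabel w gK fK).
exact: form_relabel.
Qed.

Definition rescale (c : bool -> C) (X : gspace) : gspace :=
  GSpace (deg X) (fun i j => c (deg X i) * gram X i j).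

Definition rescale_mx (c : bool -> C) (X Y : gspace) (T : mx X Y) :
  mx (rescale c X) (rescale c Y) := Mx (rescale c X) (rescale c Y) (ent T).

Lemma rescale_mx_relabel (c : bool -> C) (X Y : gspace) (f : idx X -> idx Y) :
  rescale_mx c (relabel f) = @relabel (rescale c X) (rescale c Y) f.
Proof. by []. Qed.

Definition rescale_functor (s t : bool) (c : bool -> C) : SMFunctor s t :=
  @SMF s t (rescale c) (@rescale_mx c)
    (fun X Y => @relabel (tens t (rescale c X) (rescale c Y)) (rescale c (tens s X Y)) id)
    (@relabel unitsp (rescale c unitsp) id).

Definition scale_deg (c : bool -> C) (X : gspace) (v : vec X) : vec X :=
  fun i => (c (deg X i))^* * v i.

Lemma form_rescale (c : bool -> C) (X : gspace) (v w : vec X) :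
  @form (rescale c X) v w = form (scale_deg c v) w.
Proof.
rewrite /form; apply: eq_bigr => i _; apply: eq_bigr => j _.
by rewrite /scale_deg /= rmorphM /= conjCK; ring.
Qed.

Lemma form_rescale_homog (c : bool -> C) (X : gspace) d (v w : vec X) :
  homog d v -> @form (rescale c X) v w = c d * form v w.
Proof.
move=> hv; rewrite form_rescale /form mulr_sumr; apply: eq_bigr => i _.
rewrite mulr_sumr; apply: eq_bigr => j _; rewrite /scale_deg.
case: (deg X i =P d) => [->|/eqP nd]; last by rewrite hv // !(mulr0, conjC0, mul0r).
by rewrite rmorphM /= conjCK; ring.
Qed.

Lemma app_scale_deg (c : bool -> C) (X Y : gspace) (T : mx X Y) (v : vec X) :
  even T -> app T (scale_deg c v) = scale_deg c (app T v).
Proof.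
move=> eT; apply: functional_extensionality => j; rewrite /app /scale_deg mulr_sumr.
apply: eq_bigr => i _; case: (deg Y j =P deg X i) => [->|/eqP ne]; first ring.
by rewrite eT // !mul0r mulr0.
Qed.

Lemma rescale_adjoint (c : bool -> C) (X Y : gspace) (T : mx X Y) (S : mx Y X) :
  even T -> is_adjoint T S -> is_adjoint (rescale_mx c T) (rescale_mx c S).
Proof.
move=> eT adj v w; rewrite !form_rescale.
by rewrite -[app (rescale_mx c T) v]/(app T v) -app_scale_deg.
Qed.

Lemma rescale_graded (c : bool -> C) (X : gspace) :
  graded_form X -> graded_form (rescale c X).
Proof. by move=> gX i j /= ne; rewrite (gX _ _ ne) mulr0. Qed.

Lemma rescale_nondegenerate (c : bool -> C) (X : gspace) :
  nondegenerate X -> (forall b, c b != 0) -> nondegenerate (rescale c X).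
Proof.
move=> [ndl ndr] c_neq0; split.
  move=> v v_null i.
  have scaled_null w : @form X (@scale_deg c X v) w = 0.
    by rewrite -form_rescale; exact: v_null.
  move: (ndl _ scaled_null i) => /eqP.
  by rewrite mulf_eq0 conjC_eq0 (negbTE (c_neq0 _)) => /eqP.
move=> w w_null; apply: ndr => u.
pose u' : vec X := fun i => u i / (c (deg X i))^*.
have -> : u = scale_deg c u'.
  apply: functional_extensionality => i.
  by rewrite /scale_deg /u' mulrC divfK // conjC_eq0.
by rewrite -form_rescale.
Qed.

Definition sign_twist (s t : bool) (c : bool -> C) : Prop :=
  forall a b, c (a (+) b) * sign [&& s, a & b] = sign [&& t, a & b] * c a * c b.

Lemma rescale_tens_gram s t (c : bool -> C) (X Y : gspace) :
  sign_twist s t c -> graded_form X -> graded_form Y ->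
  forall p q,
    gram (rescale c (tens s X Y)) p q = gram (tens t (rescale c X) (rescale c Y)) p q.
Proof.
move=> tw gX gY [p1 p2] [q1 q2] /=.
case: (deg X p1 =P deg X q1) => [<-|/eqP ne]; last by rewrite (gX _ _ ne) !(mulr0, mul0r).
transitivity (c (deg X p1 (+) deg Y p2) * sign [&& s, deg X p1 & deg Y p2] *
  (gram X p1 q1 * gram Y p2 q2)); first ring.
by rewrite tw; ring.
Qed.

Lemma rescale_SMD_functor s t (c : bool -> C) :
  c false = 1 -> sign_twist s t c -> (forall X, valid s X -> valid t (rescale c X)) ->
  is_SMD_functor (rescale_functor s t c).
Proof.
move=> c0 tw validc.
have graded_of_valid b X : valid b X -> graded_form X by case.
split; first exact: validc.
split; first by [].
split; first by move=> X _; apply: mx_ext.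
split; first by move=> *; apply: mx_ext.
split; first by move=> X Y T S _ _ eT _; apply: rescale_adjoint.
split.
  move=> X Y /graded_of_valid gX /graded_of_valid gY.
  rewrite /=; apply: relabel_unitary => //; first by exists id.
  exact: rescale_tens_gram tw gX gY.
split.
  rewrite /=; apply: relabel_unitary => //; first by exists id.
  by move=> p p' /=; rewrite c0 mulr1.
split; first by move=> *; apply: mx_ext => k i; rewrite /= sum_deltaL sum_deltaR.
split.
  move=> X Y Z _ _ _; rewrite /= !assoc_relabel !idm_relabel rescale_mx_relabel.
  by rewrite !tensm_relabel !comp_relabel; apply: eq_relabel => -[[]].
split.
  move=> X _; rewrite /= lunit_relabel idm_relabel rescale_mx_relabel.
  by rewrite tensm_relabel !comp_relabel; apply: eq_relabel => -[[]].
split.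
  move=> X _; rewrite /= runit_relabel idm_relabel rescale_mx_relabel.
  by rewrite tensm_relabel !comp_relabel; apply: eq_relabel => -[? []].
by move=> *; apply: mx_ext => k i; rewrite /= sum_deltaL sum_deltaR.
Qed.

Definition rescale_unit (c c' : bool -> C) (X : gspace) : mx X (rescale c' (rescale c X)) :=
  @relabel X (rescale c' (rescale c X)) id.

Definition rescale_counit (c c' : bool -> C) (Y : gspace) : mx (rescale c (rescale c' Y)) Y :=
  @relabel (rescale c (rescale c' Y)) Y id.

Lemma rescale_unit_iso s t (c c' : bool -> C) : (forall d, c' d * c d = 1) ->
  @unit_iso s t (rescale_functor s t c) (rescale_functor t s c') (rescale_unit c c').
Proof.
move=> cc'; split.
  move=> X _; apply: relabel_unitary => //; first by exists id.
  by move=> p p' /=; rewrite mulrA cc' mul1r.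
split; first by move=> *; apply: mx_ext => k i; rewrite /= sum_deltaL sum_deltaR.
split; last by rewrite /= comp_relabel.
move=> X Y _ _; rewrite /= rescale_mx_relabel tensm_relabel !comp_relabel.
by apply: eq_relabel => -[].
Qed.

Lemma rescale_counit_iso s t (c c' : bool -> C) : (forall d, c d * c' d = 1) ->
  @counit_iso s t (rescale_functor s t c) (rescale_functor t s c') (rescale_counit c c').
Proof.
move=> cc'; split.
  move=> Y _; apply: relabel_unitary => //; first by exists id.
  by move=> p p' /=; rewrite mulrA cc' mul1r.
split; first by move=> *; apply: mx_ext => k i; rewrite /= sum_deltaL sum_deltaR.
split; last by rewrite /= idm_relabel !comp_relabel.
move=> Y Y' _ _; rewrite /= rescale_mx_relabel tensm_relabel !comp_relabel.
by apply: eq_relabel => -[].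
Qed.

Definition basis (X : gspace) (i : idx X) : vec X := fun k => (k == i)%:R.

Lemma form_basis (X : gspace) (i j : idx X) : form (basis i) (basis j) = gram X i j.
Proof.
rewrite /form /basis; under eq_bigr do rewrite conjC_nat sum_deltaR.
by under eq_bigr do rewrite eq_sym; rewrite sum_deltaL.
Qed.

Lemma homog_basis (X : gspace) (i : idx X) : homog (deg X i) (basis i).
Proof. by move=> k; rewrite /basis; case: (k =P i) => [->|]; rewrite ?eqxx. Qed.

Definition gram_herm (super : bool) (X : gspace) : Prop :=
  forall i j, gram X i j = sign [&& super, deg X i & deg X j] * (gram X j i)^*.

Lemma gram_herm_rescale s t (c : bool -> C) (X : gspace) :
  (forall d, c d * sign (s && d) = sign (t && d) * (c d)^*) ->
  graded_form X -> gram_herm s X -> gram_herm t (rescale c X).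
Proof.
move=> hc gX hX i j /=.
case: (deg X i =P deg X j) => [e|/eqP ne].
  by rewrite hX -e !andbb rmorphM /= mulrA hc mulrA.
by rewrite gX // (gX j i) 1?eq_sym // !(mulr0, conjC0).
Qed.

Lemma form_herm (X : gspace) :
  gram_herm false X -> forall v w : vec X, form v w = (form w v)^*.
Proof.
move=> hX v w; rewrite /form rmorph_sum exchange_big /=; apply: eq_bigr => i _.
rewrite rmorph_sum; apply: eq_bigr => j _.
by rewrite !rmorphM /= conjCK hX /= mul1r; ring.
Qed.

Lemma form_super_herm (X : gspace) d e (v w : vec X) :
  gram_herm true X -> homog d v -> homog e w -> form v w = sign (d && e) * (form w v)^*.
Proof.
move=> hX hv hw; rewrite /form rmorph_sum exchange_big mulr_sumr /=.
apply: eq_bigr => j _; rewrite rmorph_sum mulr_sumr; apply: eq_bigr => i _.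
rewrite !rmorphM /= conjCK.
case: (deg X i =P d) => [<-|/eqP nd]; last by rewrite hv // conjC0; ring.
case: (deg X j =P e) => [<-|/eqP ne]; last by rewrite hw //; ring.
by rewrite hX /=; ring.
Qed.

Definition homog_part (X : gspace) (d : bool) (v : vec X) : vec X :=
  fun i => if deg X i == d then v i else 0.

Lemma homog_homog_part (X : gspace) d (v : vec X) : homog d (homog_part d v).
Proof. by move=> i /negPf; rewrite /homog_part => ->. Qed.

Lemma form_homog_part (X : gspace) (v : vec X) : graded_form X ->
  form v v = form (homog_part false v) (homog_part false v)
             + form (homog_part true v) (homog_part true v).
Proof.
move=> gX; rewrite /form -big_split; apply: eq_bigr => i _.
rewrite -big_split; apply: eq_bigr => j _; rewrite /homog_part /=.
case: (deg X i =P deg X j) => [<-|/eqP ne]; last by rewrite gX // !(mulr0, mul0r, addr0).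
by case: (deg X i); rewrite /= ?conjC0 !(mulr0, mul0r, addr0, add0r).
Qed.

Definition odd_phase (z : C) (b : bool) : C := if b then z else 1.

Lemma odd_phase_neq0 (z : C) b : z != 0 -> odd_phase z b != 0.
Proof. by case: b => //= _; exact: oner_neq0. Qed.

Lemma odd_phase_twist s t (z : C) :
  s != t -> z ^+ 2 = -1 -> sign_twist s t (odd_phase z).
Proof.
by move=> st z2 [] [] /=; case: s t st => -[] //= _;
  rewrite /sign /odd_phase /= ?mulr1 ?mul1r ?mulN1r ?mulNr // -expr2 z2 ?opprK.
Qed.

Lemma odd_phase_herm s t (z : C) : s != t -> z^* = - z ->
  forall d, odd_phase z d * sign (s && d) = sign (t && d) * (odd_phase z d)^*.
Proof.
move=> st zc; case: s t st => -[] //= _ [];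
  rewrite /sign /odd_phase /= ?conjC1 ?mulr1 ?mul1r //.
  by rewrite mulrN1 zc.
by rewrite mulN1r zc opprK.
Qed.

Lemma valid_rescale_super (X : gspace) :
  valid sHilb X -> valid Hilb_Z2 (rescale (odd_phase (- 'i)) X).
Proof.
move=> [gX [ndX [symX [pos0 pos1]]]].
have hX : gram_herm true X.
  by move=> i j /=; rewrite -!form_basis; apply: symX; exact: homog_basis.
split; first exact: rescale_graded.
have phase_neq0 b : odd_phase (- 'i) b != 0 by rewrite odd_phase_neq0 ?oppr_eq0 ?neq0Ci.
split; first exact: rescale_nondegenerate ndX phase_neq0.
split.
  apply/form_herm/gram_herm_rescale/hX => //.
  by apply: odd_phase_herm; rewrite // rmorphN /= conjCi.
move=> v; rewrite form_homog_part; last exact: rescale_graded.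
rewrite !(form_rescale_homog _ _ (homog_homog_part _)) /= mul1r -invCi mulrC.
by apply: addr_ge0; [apply: pos0 | apply: pos1]; exact: homog_homog_part.
Qed.

Lemma valid_rescale_plain (Y : gspace) :
  valid Hilb_Z2 Y -> valid sHilb (rescale (odd_phase 'i) Y).
Proof.
move=> [gY [ndY [symY posY]]].
have hY : gram_herm false Y by move=> i j; rewrite /= mul1r -!form_basis symY.
split; first exact: rescale_graded.
have phase_neq0 b : odd_phase 'i b != 0 by rewrite odd_phase_neq0 ?neq0Ci.
split; first exact: rescale_nondegenerate ndY phase_neq0.
split.
  move=> d e v w hv hw; apply: form_super_herm hv hw.
  by apply/gram_herm_rescale/hY => //; apply: odd_phase_herm; rewrite // conjCi.
split=> v hv; rewrite (@form_rescale_homog _ Y _ _ _ hv) /=.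
  by rewrite mul1r; exact: posY.
by rewrite mulrC mulKf ?neq0Ci //; exact: posY.
Qed.

Lemma odd_phase_inv d : odd_phase 'i d * odd_phase (- 'i) d = 1.
Proof. by case: d; rewrite /odd_phase ?mulr1 // mulrN -expr2 sqrCi opprK. Qed.

Theorem mainTheorem8 : SMD_equivalence sHilb Hilb_Z2.
Proof.
have sqrNi : (- 'i) ^+ 2 = -1 :> C by rewrite sqrrN sqrCi.
exists (rescale_functor sHilb Hilb_Z2 (odd_phase (- 'i))),
  (rescale_functor Hilb_Z2 sHilb (odd_phase 'i)), (rescale_unit _ _), (rescale_counit _ _).
split.
- apply: rescale_SMD_functor => //; last exact: valid_rescale_super.
  exact: odd_phase_twist _ sqrNi.
- apply: rescale_SMD_functor => //; last exact: valid_rescale_plain.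
  exact: odd_phase_twist _ (sqrCi C).
- exact/rescale_unit_iso/odd_phase_inv.
- by apply: rescale_counit_iso => d; rewrite mulrC odd_phase_inv.
Qed.
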